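(* Let $n,m\ge1$ and identify $n$-bit strings with elements of $\mathbb{F}_{2^n}$, with addition $\oplus$ (bitwise XOR) and field multiplication $*$; for a bit $d$ and $b\in\mathbb{F}_{2^n}$ let $d\cdot b$ be $0$ if $d=0$ and $b$ if $d=1$. Let $B_1,\dots,B_m$ be independent uniformly random elements of $\mathbb{F}_{2^n}$ (honest Bob's challenges), and let $R_A$ be a random variable on a finite set, independent of $(B_1,\dots,B_m)$. A classical cheating strategy of Alice is a collection of deterministic functions with values in $\mathbb{F}_{2^n}$ giving her messages $Y_1=f_1(R_A,B_1)$; for $2\le k\le m$, $Y_k^{(d)}=f_k(R_A,B_1,\dots,B_{k-2},B_k,d)$; and $Y_{m+1}^{(d)}=f_{m+1}(R_A,B_1,\dots,B_{m-1},d)$, where $d\in\{0,1\}$ is the bit she attempts to unveil. Let $H_d$ be the event $$Y^{(d)}_{m+1}=\bigoplus_{j=1}^{m}\Big(\prod_{i=j+1}^{m}B_i\Big)*Y^{(d)}_j\ \oplus\ d\cdot\prod_{i=1}^{m}B_i,$$ where $Y^{(d)}_1:=Y_1$, products are taken with $*$ and the empty product is $1$, and let $p_d=\Pr[H_d]$. Then for every such strategy, $p_0+p_1\le1+\omega_m$, where $\omega_m$ is the optimal winning probability of the $m$-player multiplication game over $\mathbb{F}_{2^n}$ defined below; i.e. the $(m+1)$-round protocol is $\varepsilon$-binding with $\varepsilon=\omega_m$.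
   Context: Multiplication game: for $r\ge1$ and a finite field $\mathbb{F}_q$, inputs $X_1,\dots,X_r$ are independent uniform on $\mathbb{F}_q$; player $k$ sees all inputs except $X_k$ and outputs $f_k(X_{[r]\setminus\{k\}})$ for some function $f_k:\mathbb{F}_q^{r-1}\to\mathbb{F}_q$; the game is won iff $\prod_{k=1}^rX_k=\sum_{k=1}^rf_k(X_{[r]\setminus\{k\}})$; $\omega_r$ is the maximum winning probability over all choices of $f_1,\dots,f_r$. The protocol: Alice's agents share uniform secrets $a_1,\dots,a_m$; in round 1 Bob sends $b_1$ and Alice returns $y_1=d\cdot b_1\oplus a_1$; in rounds $2\le k\le m$ Bob sends $b_k$ and Alice returns $y_k=(b_k*a_{k-1})\oplus a_k$; in round $m+1$ Alice sends $d$ and $y_{m+1}=a_m$; Bob accepts iff the relation defining $H_d$ holds. Consecutive rounds are space-like separated, so Alice's round-$k$ message cannot depend on $b_{k-1}$, and her round-1 message cannot depend on $d$; this is what the dependencies of the $f_k$ encode. $\varepsilon$-binding means $p_0+p_1\le1+\varepsilon$ for all cheating strategies. *)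

From mathcomp Require Import all_boot all_order all_algebra all_field.
Set Implicit Arguments. Unset Strict Implicit. Unset Printing Implicit Defensive.
Import Order.TTheory GRing.Theory Num.Theory.
Local Open Scope ring_scope.

(* Inputs x : {ffun 'I_r -> F}; player k's view is x with coordinate k erased
   (set to 0), so a function of the view is exactly a function of X_{[r]\{k}}. *)
Definition game_view (F : finFieldType) (r : nat) (k : 'I_r)
    (x : {ffun 'I_r -> F}) : {ffun 'I_r -> F} :=
  [ffun j => if j == k then 0 else x j].

Definition game_strategy (F : finFieldType) (r : nat) : finType :=
  {ffun 'I_r -> {ffun {ffun 'I_r -> F} -> F}}.

Definition game_wins (F : finFieldType) (r : nat) (f : game_strategy F r) : nat :=
  #|[set x : {ffun 'I_r -> F} |
      \prod_(k < r) x k == \sum_(k < r) f k (game_view k x)]|.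

Definition omega (R : realFieldType) (F : finFieldType) (r : nat) : R :=
  (\max_(f : game_strategy F r) game_wins f)%:R / (#|F| ^ r)%:R.

(* Rounds are indexed 0-based by k : 'I_m.+1 (k = 0 is round 1, k = m is round
   m+1); challenges B_1..B_m are b : {ffun 'I_m -> F} (0-based).  The message of
   round k+1 may depend on B_j (0-based j) iff j.+1 < k or j = k:
     round 1        : B_1
     round k+1 (2..m): B_1..B_{k-1}, B_{k+1}
     round m+1      : B_1..B_{m-1}.                                          *)
Definition visible (m : nat) (k : 'I_m.+1) (j : 'I_m) : bool :=
  (j.+1 < k)%N || (nat_of_ord j == nat_of_ord k).

Definition mask (F : finFieldType) (m : nat) (k : 'I_m.+1)
    (b : {ffun 'I_m -> F}) : {ffun 'I_m -> F} :=
  [ffun j => if visible k j then b j else 0].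

Definition alice_strategy (F : finFieldType) (RA : finType) (m : nat) :=
  'I_m.+1 -> RA -> {ffun 'I_m -> F} -> bool -> F.

(* Y_{k+1}^{(d)}; round-1 message does not depend on d. *)
Definition msg (F : finFieldType) (RA : finType) (m : nat)
    (f : alice_strategy F RA m) (k : 'I_m.+1) (d : bool) (r : RA)
    (b : {ffun 'I_m -> F}) : F :=
  f k r (mask k b) (if nat_of_ord k == 0%N then false else d).

Definition Hd (F : finFieldType) (RA : finType) (m : nat)
    (f : alice_strategy F RA m) (d : bool) (r : RA) (b : {ffun 'I_m -> F}) : bool :=
  msg f ord_max d r b ==
    \sum_(j < m) (\prod_(i < m | (j < i)%N) b i) * msg f (widen_ord (leqnSn m) j) d r b
    + (if d then \prod_(i < m) b i else 0).

(* p_d = Pr[H_d], with R_A ~ P independent of B uniform on F^m *)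
Definition prob_Hd (R : realFieldType) (F : finFieldType) (RA : finType) (m : nat)
    (P : {ffun RA -> R}) (f : alice_strategy F RA m) (d : bool) : R :=
  \sum_(r : RA) P r *
     ((#|[set b : {ffun 'I_m -> F} | Hd f d r b]|)%:R / (#|F| ^ m)%:R).

From mathcomp Require Import all_boot all_order all_algebra all_field.
Import Order.TTheory GRing.Theory Num.Theory.
Local Open Scope ring_scope.

(* Fix Alice's randomness r.  Subtracting the two acceptance relations H_0 and
   H_1 eliminates the commitment and leaves, with D_k := Y_k^(1) - Y_k^(0)
   (so D_1 = 0),
     B_1 * ... * B_m = D_{m+1} - sum_{k >= 2} (B_{k+1} * ... * B_m) * D_k.
   The k-th summand is computable without B_{k-1}, and D_{m+1} without B_m, so
   this is a strategy in the m-player multiplication game that wins on every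
   challenge where both H_0 and H_1 hold.  Hence
   #H_0 + #H_1 = #(H_0 u H_1) + #(H_0 n H_1) <= |F|^m + max wins, and averaging
   over r gives the bound.  Nothing specific to characteristic 2 is used. *)

Lemma avg_le (R : realFieldType) (T : finType) (P a : T -> R) (c : R) :
  (forall t, 0 <= P t) -> \sum_t P t = 1 -> (forall t, a t <= c) ->
  \sum_t P t * a t <= c.
Proof.
move=> P_ge0 P_sum1 a_le; rewrite -[leRHS]mul1r -P_sum1 big_distrl /=.
by apply: ler_sum => t _; rewrite ler_wpM2l.
Qed.

Section CheatingToGame.
Variables (F : finFieldType) (RA : finType) (m : nat).
Local Notation M := m.+1.
Variables (f : alice_strategy F RA M) (r : RA).

Definition msg_gap (k : 'I_M.+1) (b : {ffun 'I_M -> F}) : F :=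
  msg f k true r b - msg f k false r b.

Definition tail_prod (j : 'I_M) (b : {ffun 'I_M -> F}) : F :=
  \prod_(i < M | (j < i)%N) b i.

Lemma msg_gap_round1 (k : 'I_M.+1) b : k = 0%N :> nat -> msg_gap k b = 0.
Proof. by move=> k0; rewrite /msg_gap /msg k0 subrr. Qed.

Lemma msg_game_view (k : 'I_M.+1) (p : 'I_M) d x :
  ~~ visible k p -> msg f k d r (game_view p x) = msg f k d r x.
Proof.
move=> p_hidden; congr (f _ _ _ _); apply/ffunP=> j; rewrite !ffunE.
by case: eqP => [->|_]; [rewrite (negbTE p_hidden) | case: visible].
Qed.

Lemma msg_gap_game_view (k : 'I_M.+1) (p : 'I_M) x :
  ~~ visible k p -> msg_gap k (game_view p x) = msg_gap k x.
Proof. by move=> p_hidden; rewrite /msg_gap !msg_game_view. Qed.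

Lemma tail_prod_game_view (j p : 'I_M) x :
  (p <= j)%N -> tail_prod j (game_view p x) = tail_prod j x.
Proof.
move=> le_pj; apply: eq_bigr => i lt_ji; rewrite ffunE.
by case: eqP => // eq_ip; move: lt_ji; rewrite eq_ip ltnNge le_pj.
Qed.

Lemma msg_gap_last b : Hd f false r b -> Hd f true r b ->
  msg_gap ord_max b =
  \sum_(j < M) tail_prod j b * msg_gap (widen_ord (leqnSn M) j) b
  + \prod_(i < M) b i.
Proof.
move=> /eqP H0 /eqP H1; rewrite /msg_gap H0 H1 addr0 addrAC -sumrB.
by congr (_ + _); apply: eq_bigr => j _; rewrite mulrBr.
Qed.

(* Player k (0-based) pays the summand of round k+2, which does not see
   challenge k; the last player pays D of the final round. *)
Definition cheating_game_strategy : game_strategy F M :=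
  [ffun k : 'I_M => [ffun v : {ffun 'I_M -> F} =>
     if (k < m)%N then - (tail_prod (inord k.+1) v * msg_gap (inord k.+1) v)
     else msg_gap ord_max v]].

Lemma cheating_game_strategy_last b :
  cheating_game_strategy ord_max (game_view ord_max b) = msg_gap ord_max b.
Proof.
rewrite !ffunE ltnn msg_gap_game_view //.
by rewrite /visible /= ltnn eqn_leq ltnn andbF.
Qed.

Lemma cheating_game_strategy_lift (k : 'I_m) b :
  cheating_game_strategy (widen_ord (leqnSn m) k)
    (game_view (widen_ord (leqnSn m) k) b) =
  - (tail_prod (lift ord0 k) b
     * msg_gap (widen_ord (leqnSn M) (lift ord0 k)) b).
Proof.
have lt_kM : (k.+1 < M.+1)%N by rewrite !ltnS ltnW.
have -> : widen_ord (leqnSn M) (lift ord0 k) = inord k.+1.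
  by apply: val_inj; rewrite /= inordK // lift0.
have -> : lift ord0 k = inord k.+1 :> 'I_M.
  by apply: val_inj; rewrite /= inordK ?lift0 ?ltnS.
rewrite !ffunE /= ltn_ord tail_prod_game_view; last by rewrite /= inordK ?ltnS.
rewrite msg_gap_game_view // /visible /= inordK //.
by rewrite ltnn (ltn_eqF (ltnSn k)).
Qed.

Lemma Hd_game_win b : Hd f false r b -> Hd f true r b ->
  \prod_(k < M) b k
  == \sum_(k < M) cheating_game_strategy k (game_view k b).
Proof.
move=> H0 H1; apply/eqP.
rewrite [RHS]big_ord_recr /= cheating_game_strategy_last.
rewrite (msg_gap_last b H0 H1) [X in _ + (X + _)]big_ord_recl /=.
rewrite msg_gap_round1 // mulr0 add0r.
rewrite (eq_bigr _ (fun k _ => cheating_game_strategy_lift k b)).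
by rewrite sumrN addKr.
Qed.

Lemma card_Hd_le :
  (#|[set b : {ffun 'I_M -> F} | Hd f false r b]|
   + #|[set b : {ffun 'I_M -> F} | Hd f true r b]|
   <= #|F| ^ M + \max_(g : game_strategy F M) game_wins g)%N.
Proof.
rewrite -cardsUI leq_add //.
  by rewrite (leq_trans (max_card _)) // card_ffun card_ord.
apply: (leq_trans _ (leq_bigmax cheating_game_strategy)).
apply: subset_leq_card; apply/subsetP => b; rewrite !inE => /andP[H0 H1].
exact: Hd_game_win.
Qed.

End CheatingToGame.

Theorem propositionC2 (R : realFieldType) (F : finFieldType) (n m : nat)
  (RA : finType) (P : {ffun RA -> R}) (f : alice_strategy F RA m) :
  (1 <= n)%N -> (1 <= m)%N -> #|F| = (2 ^ n)%N ->
  (forall r, 0 <= P r) -> \sum_(r : RA) P r = 1 ->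
  prob_Hd P f false + prob_Hd P f true <= 1 + omega R F m.
Proof.
case: m f => [|m] f // _ _ _ P_ge0 P_sum1.
have N_gt0 : 0 < (#|F| ^ m.+1)%:R :> R by rewrite ltr0n expn_gt0 (cardD1 0).
have -> : 1 + omega R F m.+1 = (#|F| ^ m.+1
    + \max_(g : game_strategy F m.+1) game_wins g)%:R / (#|F| ^ m.+1)%:R.
  by rewrite natrD mulrDl divff ?lt0r_neq0.
rewrite /prob_Hd -big_split /=.
under eq_bigr do rewrite -mulrDr -mulrDl -natrD.
apply: avg_le => // r.
by rewrite ler_pM2r ?invr_gt0 // ler_nat card_Hd_le.
Qed.
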